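(* Let $1\to A\to B\xrightarrow{f}C\to 1$ be an exact sequence of definable group homomorphisms between groups definable in $(Z,R)^{eq}$, and assume that $A$ and $C$ are $R$-internal. Then $B$ is $R$-internal.
   Context: Let $\mathfrak C$ be a monster model, $Z,R$ definable subsets of $\mathfrak C$ which are stably embedded (subsets of $Z^n$, resp. $R^n$, definable with parameters from $\mathfrak C$ are definable with parameters from $Z$, resp. $R$) and fully orthogonal (for all $m,n$, every definable subset of $Z^m\times R^n$ is a finite union of sets $U\times V$ with $U\subseteq Z^m$, $V\subseteq R^n$ definable). $(Z,R)^{eq}$ is the two-sorted structure $(Z,R)$ (no connection between the sorts) expanded by all imaginary sorts; ''definable'' means definable in $(Z,R)^{eq}$ with parameters. A definable set $X$ is $R$-internal if there is a definable surjection from $R^k$ onto $X$ for some $k$. *)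

From Stdlib Require List.
From mathcomp Require Import all_boot.
Set Implicit Arguments. Unset Strict Implicit. Unset Printing Implicit Defensive.

Record language := Language { sym : Type; arity : sym -> nat }.

Record structure (L : language) := Structure {
  carrier :> Type;
  interp : forall s : sym L, ('I_(arity s) -> carrier) -> Prop }.

Inductive formula (L : language) : Type :=
| FRel (s : sym L) (args : 'I_(arity s) -> nat)
| FEq (i j : nat)
| FNot (f : formula L)
| FAnd (f g : formula L)
| FEx (i : nat) (f : formula L).

Definition upd {M : Type} (v : nat -> M) (i : nat) (a : M) : nat -> M :=
  fun j => if j == i then a else v j.

Fixpoint sat (L : language) (C : structure L) (v : nat -> C) (f : formula L)
  : Prop :=
  match f with
  | FRel s args => @interp L C s (fun x => v (args x))
  | FEq i j => v i = v j
  | FNot g => ~ @sat L C v g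
  | FAnd g h => @sat L C v g /\ @sat L C v h
  | FEx i g => exists a : C, @sat L C (upd v i a) g
  end.
Arguments sat {L} C v f.

Definition tcat {M : Type} (k l : nat) (a : 'I_k -> M) (b : 'I_l -> M)
  : 'I_(k + l) -> M :=
  fun i => match split i with inl i1 => a i1 | inr i2 => b i2 end.
Definition tleft {M : Type} (k l : nat) (t : 'I_(k + l) -> M) : 'I_k -> M :=
  fun i => t (lshift l i).
Definition tright {M : Type} (k l : nat) (t : 'I_(k + l) -> M) : 'I_l -> M :=
  fun j => t (rshift k j).

Definition asg {M : Type} (k : nat) (a : 'I_k -> M) (q : nat -> M) : nat -> M :=
  fun j => match (insub j : option 'I_k) with Some i => a i | None => q j end.

Definition definable_over (L : language) (C : structure L) (P : C -> Prop)
  (k : nat) (A : ('I_k -> C) -> Prop) : Prop :=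
  exists (l : nat) (b : 'I_l -> C) (phi : formula L),
    (forall i, P (b i)) /\
    forall (a : 'I_k -> C) (q : nat -> C),
      A a <-> sat C (asg (tcat a b) q) phi.

Definition definable (L : language) (C : structure L) (k : nat)
  (A : ('I_k -> C) -> Prop) : Prop :=
  definable_over (fun _ => True) A.

Definition definable1 (L : language) (C : structure L) (Z : C -> Prop) : Prop :=
  definable (fun t : 'I_1 -> C => Z (t ord0)).

Definition card_lt (I J : Type) : Prop :=
  (exists f : I -> J, injective f) /\ ~ (exists g : J -> I, injective g).

(* every finitely satisfiable family of fewer than |C| formulas in the free
   variable 0 (with parameters) is realized *)
Definition saturated (L : language) (C : structure L) : Prop :=
  forall (I : Type) (phi : I -> formula L) (p : I -> nat -> C),
    card_lt I C ->
    (forall l : list I, exists a : C,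
        forall i, List.In i l -> sat C (upd (p i) 0 a) (phi i)) ->
    exists a : C, forall i, sat C (upd (p i) 0 a) (phi i).

Definition monster (L : language) (C : structure L) : Prop :=
  saturated C /\ card_lt (sym L) C.

Definition stably_embedded (L : language) (C : structure L) (Z : C -> Prop)
  : Prop :=
  forall (n : nat) (A : ('I_n -> C) -> Prop),
    definable A -> (forall t, A t -> forall i, Z (t i)) ->
    definable_over Z A.

Definition fully_orthogonal (L : language) (C : structure L) (Z R : C -> Prop)
  : Prop :=
  forall (m n : nat) (D : ('I_(m + n) -> C) -> Prop),
    definable D ->
    (forall t, D t -> (forall i, Z (tleft t i)) /\ (forall j, R (tright t j))) ->
    exists s : list ((('I_m -> C) -> Prop) * (('I_n -> C) -> Prop)),
      (forall p, List.In p s ->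
         [/\ definable p.1, definable p.2,
             (forall x, p.1 x -> forall i, Z (x i)) &
             (forall y, p.2 y -> forall j, R (y j))]) /\
      (forall t, D t <-> exists p, List.In p s /\ p.1 (tleft t) /\ p.2 (tright t)).

(* A sort of (Z,R): a finite product of copies of Z (colour true) and R
   (colour false). *)
Definition sortset {M : Type} (Z R : M -> Prop) (k : nat) (col : 'I_k -> bool)
  (t : 'I_k -> M) : Prop :=
  forall i, if col i then Z (t i) else R (t i).

(* A set in (Z,R)^eq is presented as dom / ker, where dom is a definable
   subset of a sort of (Z,R) and ker (the fibres of proj) is a definable
   equivalence relation on it; the carrier is the quotient (given abstractly,
   via the surjection proj). *)
Record eq_group (M : Type) := EqGroup {
  eg_k : nat;
  eg_col : 'I_eg_k -> bool;
  eg_dom : ('I_eg_k -> M) -> Prop;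
  eg_car : Type;
  eg_proj : ('I_eg_k -> M) -> eg_car;
  eg_mul : eg_car -> eg_car -> eg_car;
  eg_one : eg_car;
  eg_inv : eg_car -> eg_car }.

Definition def_group (L : language) (C : structure L) (Z R : C -> Prop)
  (G : eq_group C) : Prop :=
  let k := eg_k G in
  let dom := @eg_dom C G in
  let pr := @eg_proj C G in
  let mul := @eg_mul C G in
  (forall t, dom t -> sortset Z R (@eg_col C G) t) /\
  definable dom /\
  (forall g, exists t, dom t /\ pr t = g) /\
  definable (fun t : 'I_(k + k) -> C =>
     [/\ dom (tleft t), dom (tright t) & pr (tleft t) = pr (tright t)]) /\
  definable (fun t : 'I_((k + k) + k) -> C =>
     [/\ dom (tleft (tleft t)), dom (tright (tleft t)), dom (tright t) &
         pr (tright t) = mul (pr (tleft (tleft t))) (pr (tright (tleft t)))]) /\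
  (forall x y z, mul x (mul y z) = mul (mul x y) z) /\
  (forall x, mul (@eg_one C G) x = x) /\
  (forall x, mul (@eg_inv C G x) x = @eg_one C G).

Definition def_map (L : language) (C : structure L) (G H : eq_group C)
  (f : eg_car G -> eg_car H) : Prop :=
  definable (fun t : 'I_(eg_k G + eg_k H) -> C =>
    [/\ eg_dom (tleft t), eg_dom (tright t) &
        f (eg_proj (tleft t)) = eg_proj (tright t)]).

Definition def_hom (L : language) (C : structure L) (G H : eq_group C)
  (f : eg_car G -> eg_car H) : Prop :=
  def_map f /\ forall x y, f (eg_mul x y) = eg_mul (f x) (f y).

Definition R_internal (L : language) (C : structure L) (R : C -> Prop)
  (G : eq_group C) : Prop :=
  exists (n : nat) (h : ('I_n -> C) -> eg_car G),
    (forall g, exists r, (forall j, R (r j)) /\ h r = g) /\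
    definable (fun t : 'I_(n + eg_k G) -> C =>
      [/\ (forall j, R (tleft t j)), eg_dom (tright t) &
          h (tleft t) = eg_proj (tright t)]).

From mathcomp Require Import all_boot zify.
From Stdlib Require Import ClassicalEpsilon FunctionalExtensionality Classical.
Set Implicit Arguments. Unset Strict Implicit. Unset Printing Implicit Defensive.

(* Split a tuple representing an element of B into its Z-coordinates x and its
   R-coordinates y. By full orthogonality, the definable set of triples
   (x, rc, y) for which [x, y] lies over h_C(rc) is a finite union of rectangles
   U_k x V_k; fixing a point z_k of each U_k, every h_C(rc) has a preimage
   [z_k, y] with y a tuple from R. Any b over h_C(rc) is then [z_k, y] times an
   element of ker f = i(A), so
     (ra, rc, y) |-> [z_k, y] * i(h_A(ra)),  k least such that [z_k, y] lies
   over h_C(rc),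
   is a definable map from a power of R onto B. *)

Section Formulas.
Variables (L : language) (C : structure L).

Lemma eq_sat (phi : formula L) (v v' : nat -> C) :
  v =1 v' -> sat C v phi <-> sat C v' phi.
Proof.
elim: phi v v' => [s args|i j|g IH|g IHg h IHh|i g IH] v v' E /=.
- by rewrite (functional_extensionality _ _ (fun x => E (args x))).
- by rewrite !E.
- by rewrite (IH v v' E).
- by rewrite (IHg v v' E) (IHh v v' E).
- have E' a : upd v i a =1 upd v' i a by move=> j; rewrite /upd; case: eqP.
  by split=> -[a Ha]; exists a; [apply/(IH _ _ (E' a)) | apply/(IH _ _ (E' a))].
Qed.

Lemma eq_satW (phi : formula L) (v v' : nat -> C) :
  v =1 v' -> sat C v phi -> sat C v' phi.
Proof. by move=> E; apply: (proj1 (eq_sat phi E)). Qed.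

Fixpoint rename_formula (r : nat -> nat) (phi : formula L) : formula L :=
  match phi with
  | FRel s args => FRel (fun x => r (args x))
  | FEq i j => FEq L (r i) (r j)
  | FNot g => FNot (rename_formula r g)
  | FAnd g h => FAnd (rename_formula r g) (rename_formula r h)
  | FEx i g => FEx (r i) (rename_formula r g)
  end.

Lemma sat_rename (r : nat -> nat) (phi : formula L) (v : nat -> C) :
  injective r -> sat C v (rename_formula r phi) <-> sat C (v \o r) phi.
Proof.
move=> r_inj; elim: phi v => [s args|i j|g IH|g IHg h IHh|i g IH] v //=.
- by rewrite IH.
- by rewrite IHg IHh.
- split=> -[a Ha]; exists a.
  + by move/IH: Ha; apply: eq_satW => j; rewrite /upd /= (inj_eq r_inj).
  + by apply/IH; move: Ha; apply: eq_satW => j; rewrite /upd /= (inj_eq r_inj).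
Qed.

Fixpoint var_bound (phi : formula L) : nat :=
  match phi with
  | FRel s args => \max_(x < arity s) (args x).+1
  | FEq i j => maxn i.+1 j.+1
  | FNot g => var_bound g
  | FAnd g h => maxn (var_bound g) (var_bound h)
  | FEx i g => maxn i.+1 (var_bound g)
  end.

Lemma sat_var_bound (phi : formula L) (v v' : nat -> C) :
  (forall j, j < var_bound phi -> v j = v' j) -> sat C v phi <-> sat C v' phi.
Proof.
elim: phi v v' => [s args|i j|g IH|g IHg h IHh|i g IH] v v' E /=.
- suff -> : (fun x => v (args x)) = (fun x => v' (args x)) by [].
  apply: functional_extensionality => x; apply: E.
  exact: (@leq_bigmax _ (fun x => (args x).+1) x).
- by rewrite !E // leq_max ltnSn ?orbT.
- by rewrite (IH v v' E).
- by rewrite (IHg v v') ?(IHh v v') // => j lt_j; apply: E; rewrite leq_max lt_j ?orbT.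
- have E' a : forall j, j < var_bound g -> upd v i a j = upd v' i a j.
    by move=> j lt_j; rewrite /upd; case: eqP => // _; apply: E; rewrite leq_max lt_j orbT.
  by split=> -[a Ha]; exists a; [apply/(IH _ _ (E' a)) | apply/(IH _ _ (E' a))].
Qed.

End Formulas.

Section AssignmentDefinability.
Variables (L : language) (C : structure L) (c0 : C).

(* [P] is defined by a formula read under [mix v w]: variable [j.*2] denotes
   [v j] and the odd variables denote parameters. *)
Definition mix (v w : nat -> C) : nat -> C :=
  fun j => if odd j then w j else v j./2.

Definition adef (P : (nat -> C) -> Prop) :=
  exists (phi : formula L) (w : nat -> C), forall v, P v <-> sat C (mix v w) phi.

Lemma mix_double v w j : mix v w j.*2 = v j.
Proof. by rewrite /mix odd_double doubleK. Qed.

Lemma adef_ext P Q : (forall v, P v <-> Q v) -> adef P -> adef Q.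
Proof. by move=> PQ [phi [w HP]]; exists phi, w => v; rewrite -PQ. Qed.

Lemma adefN P : adef P -> adef (fun v => ~ P v).
Proof. by move=> [phi [w HP]]; exists (FNot phi), w => v /=; rewrite HP. Qed.

Lemma adefT : adef (fun _ => True).
Proof. by exists (FEq L 0 0), (fun _ => c0). Qed.

Lemma adef_eq i j : adef (fun v => v i = v j).
Proof. by exists (FEq L i.*2 j.*2), (fun _ => c0) => v /=; rewrite !mix_double. Qed.

Lemma adef_eqc i c : adef (fun v => v i = c).
Proof. by exists (FEq L i.*2 1), (fun _ => c) => v /=; rewrite mix_double. Qed.

(* The parameters of the two conjuncts are moved to the odd variables that are
   3, resp. 1, modulo 4. *)
Definition param_left j := if odd j then j.*2.+1 else j.
Definition param_right j := if odd j then j.+1.*2.+1 else j.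

Lemma adefI P Q : adef P -> adef Q -> adef (fun v => P v /\ Q v).
Proof.
move=> [phi1 [w1 HP]] [phi2 [w2 HQ]].
have inj_l : injective param_left.
  by move=> x y; rewrite /param_left; case: ifP => ?; case: ifP => ?; lia.
have inj_r : injective param_right.
  by move=> x y; rewrite /param_right; case: ifP => ?; case: ifP => ?; lia.
pose w x := if odd x./2 then w1 x./2 else w2 x./2.-1.
exists (FAnd (rename_formula param_left phi1) (rename_formula param_right phi2)), w.
move=> v /=; rewrite !sat_rename // HP HQ.
have El : mix v w \o param_left =1 mix v w1.
  move=> j; rewrite /= /param_left; case Oj: (odd j); rewrite /mix ?Oj //=.
  by rewrite odd_double /w /= uphalf_double Oj.
have Er : mix v w \o param_right =1 mix v w2.
  move=> j; rewrite /= /param_right; case Oj: (odd j); rewrite /mix ?Oj //=.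
  by rewrite odd_double /w /= uphalf_double Oj.
by rewrite (eq_sat _ El) (eq_sat _ Er).
Qed.

Definition override (ps : seq nat) (f v : nat -> C) : nat -> C :=
  fun j => if j \in ps then f j else v j.

Lemma sat_exists_seq (phi : formula L) (ps : seq nat) (v : nat -> C) :
  sat C v (foldr (@FEx L) phi ps) <-> exists f, sat C (override ps f v) phi.
Proof.
elim: ps v => [|p ps IH] v /=.
  split=> [H|[f]]; first by exists v; apply: eq_satW H.
  exact: eq_satW.
split=> [[a /IH [f Hf]]|[f Hf]].
  exists (fun j => if j \in ps then f j else a); apply: eq_satW Hf => j.
  rewrite /override /upd in_cons; case: (j \in ps); rewrite ?orbT //.
  by case: eqP => [->|]; rewrite /= ?eqxx.
exists (f p); apply/IH; exists f; apply: eq_satW Hf => j.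
rewrite /override /upd in_cons; case: (j \in ps); rewrite ?orbT //.
by case: eqP => [->|].
Qed.

Lemma adef_exists_at (ps : seq nat) P :
  adef P -> adef (fun v => exists f, P (override ps f v)).
Proof.
move=> [phi [w HP]]; exists (foldr (@FEx L) phi [seq i.*2 | i <- ps]), w => v.
have mem_ps j : (j \in [seq i.*2 | i <- ps]) = ~~ odd j && (j./2 \in ps).
  case Oj: (odd j) => /=.
    by apply/mapP=> -[i _ Ej]; rewrite Ej odd_double in Oj.
  have Ej : j = j./2.*2 by lia.
  by rewrite {1}Ej mem_map //; exact: double_inj.
rewrite sat_exists_seq; split=> -[f Hf].
- exists (fun j => f j./2); move/HP: Hf; apply: eq_satW => j.
  by rewrite /override /mix mem_ps; case: (odd j).
- exists (fun j => f j.*2); apply/HP; apply: eq_satW Hf => j.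
  by rewrite /override /mix mem_ps; case Oj: (odd j) => //=; rewrite (_ : j./2.*2 = j) //; lia.
Qed.

Lemma adef_forall_seq (T : eqType) (s : seq T) (P : T -> (nat -> C) -> Prop) :
  (forall x, adef (P x)) -> adef (fun v => forall x, x \in s -> P x v).
Proof.
move=> HP; elim: s => [|x s IH].
  by apply: adef_ext adefT => v.
apply: adef_ext (adefI (HP x) IH) => v; split=> [[Px Ps] y|Hs].
  by rewrite in_cons => /orP[/eqP->|/Ps].
by split=> [|y ys]; apply: Hs; rewrite in_cons ?eqxx ?ys ?orbT.
Qed.

Lemma adef_forall k (P : 'I_k -> (nat -> C) -> Prop) :
  (forall i, adef (P i)) -> adef (fun v => forall i, P i v).
Proof.
move=> HP; apply: adef_ext (adef_forall_seq (enum 'I_k) HP) => v.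
by split=> H i; [apply: H; rewrite mem_enum|].
Qed.

Lemma asg_tcatl k l (x : 'I_k -> C) (b : 'I_l -> C) q (i : 'I_k) :
  asg (tcat x b) q i = x i.
Proof.
rewrite /asg -[nat_of_ord i]/(nat_of_ord (lshift l i)) valK.
by rewrite /tcat (unsplitK (inl i)).
Qed.

Lemma asg_tcatr k l (x : 'I_k -> C) (b : 'I_l -> C) q (j : 'I_l) :
  asg (tcat x b) q (k + j) = b j.
Proof.
rewrite /asg -[k + j]/(nat_of_ord (rshift k j)) valK.
by rewrite /tcat (unsplitK (inr j)).
Qed.

Lemma asg_tcat_out k l (x : 'I_k -> C) (b : 'I_l -> C) q j :
  k + l <= j -> asg (tcat x b) q j = q j.
Proof. by move=> le_j; rewrite /asg insubF // ltnNge le_j. Qed.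

Lemma adef_shift k (D : ('I_k -> C) -> Prop) N :
  definable D -> adef (fun v => D (fun i => v (N + i))).
Proof.
move=> [l [b [phi [_ HD]]]].
pose r j := if j < k then (N + j).*2 else
            if j < k + l then (j - k).*2.+1 else j.*2.+1.
have r_inj : injective r.
  by move=> x y; rewrite /r; repeat case: ifP => ?; lia.
pose w x := oapp b c0 (insub x./2).
exists (rename_formula r phi), w => v.
rewrite (HD _ (mix v w \o r)) sat_rename //; apply: (eq_sat phi) => j /=.
have [lt_jk|le_kj] := ltnP j k.
  by rewrite -[j]/(nat_of_ord (Ordinal lt_jk)) asg_tcatl /r lt_jk mix_double.
have [lt_jl|le_lj] := ltnP j (k + l); last by rewrite asg_tcat_out.
have lt_i : j - k < l by lia.
rewrite -(subnKC le_kj) -[j - k]/(nat_of_ord (Ordinal lt_i)) asg_tcatr.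
rewrite /r ltnNge leq_addr /= ltn_add2l lt_i addKn /mix /= odd_double.
by rewrite /w /= uphalf_double -[j - k]/(nat_of_ord (Ordinal lt_i)) valK.
Qed.

Lemma definable_adef k (D : ('I_k -> C) -> Prop) :
  adef (fun v => D (fun i => v i)) -> definable D.
Proof.
move=> [phi [w HD]]; set N := var_bound phi.
(* variables of [D] go to [0, k), the parameters below [N] to [k, k + N), and
   all other variables beyond the parameters of the resulting definition *)
pose r j := if odd j then (if j./2 < N then k + j./2 else k + N + j.*2)
            else (if j./2 < k then j./2 else k + N + j.*2).
have r_inj : injective r.
  by move=> x y; rewrite /r; repeat case: ifP => ?; lia.
exists N, (fun m : 'I_N => w m.*2.+1), (rename_formula r phi); split=> // a q.
pose v j := oapp a (q (k + N + j.*2.*2)) (insub j).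
have -> : a = (fun i => v i) by apply: functional_extensionality => i; rewrite /v valK.
rewrite HD sat_rename //; apply: sat_var_bound => j lt_jN.
rewrite /mix /= /r; case: ifP => Oj.
  have lt_m : j./2 < N by lia.
  rewrite lt_m -[j./2]/(nat_of_ord (Ordinal lt_m)) asg_tcatr /=.
  by rewrite (_ : j./2.*2.+1 = j) //; lia.
have [lt_mk|le_km] := ltnP j./2 k.
  by rewrite -[j./2]/(nat_of_ord (Ordinal lt_mk)) asg_tcatl /v valK.
rewrite asg_tcat_out; last by lia.
by rewrite /v insubF ?ltnNge ?le_km //= (_ : j./2.*2 = j) //; lia.
Qed.

End AssignmentDefinability.

Section Tuples.
Variable M : Type.

Lemma tleft_tcat k l (a : 'I_k -> M) (b : 'I_l -> M) : tleft (tcat a b) = a.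
Proof.
by apply: functional_extensionality => x; rewrite /tleft /tcat (unsplitK (inl x)).
Qed.

Lemma tright_tcat k l (a : 'I_k -> M) (b : 'I_l -> M) : tright (tcat a b) = b.
Proof.
by apply: functional_extensionality => x; rewrite /tright /tcat (unsplitK (inr x)).
Qed.

Lemma tcat_all (P : M -> Prop) k l (a : 'I_k -> M) (b : 'I_l -> M) :
  (forall i, P (a i)) -> (forall j, P (b j)) -> forall i, P (tcat a b i).
Proof. by move=> Pa Pb i; rewrite /tcat; case: (split i). Qed.

Definition tmerge k p q (sel : 'I_k -> 'I_p + 'I_q) (x : 'I_p -> M) (y : 'I_q -> M)
  : 'I_k -> M := fun i => match sel i with inl a => x a | inr b => y b end.

End Tuples.

Section Definable.
Variables (L : language) (C : structure L) (c0 : C).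

Lemma definable_ext k (D E : ('I_k -> C) -> Prop) :
  (forall t, D t <-> E t) -> definable D -> definable E.
Proof. by move=> DE [l [b [phi [_ HD]]]]; exists l, b, phi; split=> // a q; rewrite -DE. Qed.

Lemma definableT k : definable (fun _ : 'I_k -> C => True).
Proof. by apply: definable_adef; apply: (adefT c0). Qed.

Lemma definableN k (D : ('I_k -> C) -> Prop) :
  definable D -> definable (fun t => ~ D t).
Proof. by move=> HD; apply: definable_adef; apply/adefN/(adef_shift c0 0 HD). Qed.

Lemma definableI k (D E : ('I_k -> C) -> Prop) :
  definable D -> definable E -> definable (fun t => D t /\ E t).
Proof.
move=> HD HE; apply: definable_adef.
exact: adefI (adef_shift c0 0 HD) (adef_shift c0 0 HE).
Qed.

Lemma definableU k (D E : ('I_k -> C) -> Prop) :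
  definable D -> definable E -> definable (fun t => D t \/ E t).
Proof.
move=> HD HE; apply: definable_ext (definableN (definableI (definableN HD) (definableN HE))).
by move=> t; tauto.
Qed.

Lemma definable_imply k (b : bool) (D : ('I_k -> C) -> Prop) :
  definable D -> definable (fun t => b -> D t).
Proof.
case: b => HD; first by apply: definable_ext HD => t; split=> // H; apply: H.
by apply: definable_ext (@definableT k) => t.
Qed.

Lemma definable_forall k m (D : 'I_m -> ('I_k -> C) -> Prop) :
  (forall i, definable (D i)) -> definable (fun t => forall i, D i t).
Proof.
move=> HD; apply: definable_adef.
apply: (adef_forall c0) => i; exact (adef_shift c0 0 (HD i)).
Qed.

Lemma definable_exists_ord k m (D : 'I_m -> ('I_k -> C) -> Prop) :
  (forall i, definable (D i)) -> definable (fun t => exists i, D i t).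
Proof.
move=> HD; apply: definable_ext (definableN (definable_forall (fun i => definableN (HD i)))).
by move=> t; split=> [/not_all_not_ex|[i Di] /(_ i)].
Qed.

Lemma definable_exists k l (P : ('I_k -> C) -> ('I_l -> C) -> Prop) :
  definable (fun t => P (tleft t) (tright t)) -> definable (fun x => exists y, P x y).
Proof.
move=> HP; apply: definable_adef.
apply: adef_ext (adef_exists_at (iota k l) (adef_shift c0 0 HP)) => v /=.
have left_v f : tleft (fun i : 'I_(k + l) => override (iota k l) f v i) = (fun i => v i).
  apply: functional_extensionality => i.
  by rewrite /tleft /override mem_iota /= leqNgt ltn_ord.
have right_v f : tright (fun i : 'I_(k + l) => override (iota k l) f v i) =
                 (fun j => f (k + j)).
  apply: functional_extensionality => j.
  by rewrite /tright /override mem_iota /= leq_addr ltn_add2l ltn_ord.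
split=> -[f Pf]; first by exists (fun j => f (k + j)); rewrite -(left_v f) -right_v.
exists (fun j => oapp f c0 (insub (j - k))); rewrite left_v right_v.
suff -> : (fun j : 'I_l => oapp f c0 (insub (k + j - k))) = f by [].
by apply: functional_extensionality => j; rewrite addKn valK.
Qed.

Definition coord_map k l (F : ('I_k -> C) -> 'I_l -> C) :=
  exists tau : 'I_l -> 'I_k + C,
    forall t i, F t i = match tau i with inl j => t j | inr c => c end.

Lemma definable_comp k l (D : ('I_l -> C) -> Prop) (F : ('I_k -> C) -> 'I_l -> C) :
  coord_map F -> definable D -> definable (fun t => D (F t)).
Proof.
move=> [tau Ftau] HD; apply: definable_adef.
pose at_v (v : nat -> C) i := match tau i with inl j => v (nat_of_ord j) | inr c => c end.
have HQ : adef (fun v => (forall i : 'I_l, v (k + i) = at_v v i) /\ D (fun i => v (k + i))).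
  apply: adefI; last exact: (adef_shift c0).
  apply: (adef_forall c0) => i; rewrite /at_v.
  by case: (tau i) => [j|c]; [exact: (adef_eq c0)|exact: adef_eqc].
apply: adef_ext (adef_exists_at (iota k l) HQ) => v.
have at_override f : at_v (override (iota k l) f v) = at_v v.
  apply: functional_extensionality => i; rewrite /at_v; case: (tau i) => // j.
  by rewrite /override mem_iota leqNgt ltn_ord.
have override_block f (i : 'I_l) : override (iota k l) f v (k + i) = f (k + i).
  by rewrite /override mem_iota leq_addr ltn_add2l ltn_ord.
have -> : F (fun j => v j) = at_v v by apply: functional_extensionality => i; rewrite Ftau.
split=> [[f [Ef HDf]]|HDv].
  suff <- : (fun i : 'I_l => override (iota k l) f v (k + i)) = at_v v by [].
  by apply: functional_extensionality => i; rewrite Ef at_override.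
exists (fun j => oapp (at_v v) c0 (insub (j - k))); rewrite at_override.
have E : (fun i : 'I_l => override (iota k l)
           (fun j => oapp (at_v v) c0 (insub (j - k))) v (k + i)) = at_v v.
  by apply: functional_extensionality => i; rewrite override_block addKn valK.
by split=> [i|]; rewrite ?E // -[RHS](congr1 (fun g => g i) E).
Qed.

Lemma coord_map_id k : coord_map (fun t : 'I_k -> C => t).
Proof. by exists inl. Qed.

Lemma coord_map_const k l (x : 'I_l -> C) : coord_map (fun _ : 'I_k -> C => x).
Proof. by exists (fun i => inr (x i)). Qed.

Lemma coord_map_tleft k l m (F : ('I_k -> C) -> 'I_(l + m) -> C) :
  coord_map F -> coord_map (fun t => tleft (F t)).
Proof. by move=> [tau Ftau]; exists (fun i => tau (lshift m i)) => t i; apply: Ftau. Qed.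

Lemma coord_map_tright k l m (F : ('I_k -> C) -> 'I_(l + m) -> C) :
  coord_map F -> coord_map (fun t => tright (F t)).
Proof. by move=> [tau Ftau]; exists (fun i => tau (rshift l i)) => t i; apply: Ftau. Qed.

Lemma coord_map_tcat k l m (F : ('I_k -> C) -> 'I_l -> C) (G : ('I_k -> C) -> 'I_m -> C) :
  coord_map F -> coord_map G -> coord_map (fun t => tcat (F t) (G t)).
Proof.
move=> [tauF EF] [tauG EG].
exists (fun i => match split i with inl a => tauF a | inr b => tauG b end) => t i.
by rewrite /tcat; case: (split i).
Qed.

Lemma coord_map_tmerge k p q (sel : 'I_k -> 'I_p + 'I_q) n
  (F : ('I_n -> C) -> 'I_p -> C) (G : ('I_n -> C) -> 'I_q -> C) :
  coord_map F -> coord_map G -> coord_map (fun t => tmerge sel (F t) (G t)).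
Proof.
move=> [tauF EF] [tauG EG].
exists (fun i => match sel i with inl a => tauF a | inr b => tauG b end) => t i.
by rewrite /tmerge; case: (sel i).
Qed.

Lemma coord_map_comp k l m (F : ('I_l -> C) -> 'I_m -> C) (G : ('I_k -> C) -> 'I_l -> C) :
  coord_map F -> coord_map G -> coord_map (fun t => F (G t)).
Proof.
move=> [tauF EF] [tauG EG].
exists (fun i => match tauF i with inl j => tauG j | inr c => inr c end) => t i.
by rewrite EF; case: (tauF i) => // j; rewrite EG.
Qed.

Lemma definable_all k l (X : C -> Prop) (F : ('I_k -> C) -> 'I_l -> C) :
  definable1 X -> coord_map F -> definable (fun t => forall j, X (F t j)).
Proof.
move=> HX [tau Ftau]; apply: definable_forall => j.
apply: (@definable_comp _ _ _ (fun t _ => F t j)) HX.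
by exists (fun _ => tau j) => t _; apply: Ftau.
Qed.

End Definable.

#[local] Hint Resolve coord_map_id coord_map_const coord_map_tleft coord_map_tright
  coord_map_tcat coord_map_tmerge : coord_map.

Definition decide (P : Prop) : bool :=
  if excluded_middle_informative P then true else false.

Lemma decideP (P : Prop) : reflect P (decide P).
Proof. by rewrite /decide; case: excluded_middle_informative => H; constructor. Qed.

Section FirstIndex.
Variables (m : nat) (P : 'I_m -> Prop).

Lemma ex_minimal_ord : (exists k, P k) -> exists k, P k /\ forall k' : 'I_m, k' < k -> ~ P k'.
Proof.
move=> [k Pk]; apply: NNPP => none.
suff : forall n (k' : 'I_m), k' < n -> ~ P k' by move/(_ k.+1 k); apply.
elim=> [//|n IH] k' lt_k' Pk'; apply: none; exists k'; split=> // k'' lt_k''.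
by apply: IH; lia.
Qed.

Definition first_ord : option 'I_m :=
  [pick k | decide (P k /\ forall k' : 'I_m, k' < k -> ~ P k')].

Lemma first_ordE k : first_ord = Some k <-> P k /\ forall k' : 'I_m, k' < k -> ~ P k'.
Proof.
rewrite /first_ord.
case: (pickP (fun k => decide (P k /\ forall k' : 'I_m, k' < k -> ~ P k')))
  => [k0 /decideP [Pk0 min0]|none]; last first.
  by split=> // Pk; move/negbT/decideP: (none k).
split=> [[<-]|[Pk mink]] //; congr Some; apply/val_inj/eqP.
rewrite eqn_leq; apply/andP; split; rewrite leqNgt; apply/negP => lt.
  exact: min0 _ lt Pk.
exact: mink _ lt Pk0.
Qed.

Lemma first_ord_None : first_ord = None -> forall k, ~ P k.
Proof.
move=> E k Pk; have [k0 min0] := ex_minimal_ord (ex_intro _ k Pk).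
by move/first_ordE: min0; rewrite E.
Qed.

Lemma first_ord_caseE (T : Type) (F : 'I_m -> T) (d x : T) (V : 'I_m -> Prop) (V0 : Prop) :
  (forall k, P k -> F k = x <-> V k) -> (d = x <-> V0) ->
  (if first_ord is Some k then F k else d) = x <->
  (exists k, [/\ P k, forall k' : 'I_m, k' < k -> ~ P k' & V k]) \/
  ((forall k, ~ P k) /\ V0).
Proof.
move=> FV dV0; case E: first_ord => [k|].
  have [Pk mink] := proj1 (first_ordE k) E.
  rewrite FV //; split=> [Vk|[[k' [Pk' mink' Vk']]|[/(_ k Pk) //]]]; first by left; exists k.
  by move: E; rewrite (proj2 (first_ordE k') (conj Pk' mink')) => -[<-].
have none := first_ord_None E.
by rewrite dV0; split=> [v0|[[k []]|[]]] //; [right|move/none].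
Qed.

End FirstIndex.

Lemma eq_first_ord m (P P' : 'I_m -> Prop) :
  (forall k, P k <-> P' k) -> first_ord P = first_ord P'.
Proof.
move=> PP'; apply: eq_pick => k.
have E (Q Q' : 'I_m -> Prop) : (forall k, Q k <-> Q' k) ->
    (Q k /\ forall k' : 'I_m, k' < k -> ~ Q k') -> Q' k /\ forall k' : 'I_m, k' < k -> ~ Q' k'.
  by move=> QQ' [Qk minQ]; split=> [|k' lt_k' /QQ']; [exact/QQ'|exact: minQ].
by apply/decideP/decideP; apply: E => // k'; split=> /PP'.
Qed.

Section Graphs.
Variables (L : language) (C : structure L).

Definition map_graph (G H : eq_group C) (f : eg_car G -> eg_car H)
  (t : 'I_(eg_k G + eg_k H) -> C) : Prop :=
  [/\ eg_dom (tleft t), eg_dom (tright t) & f (eg_proj (tleft t)) = eg_proj (tright t)].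

Definition int_graph (R : C -> Prop) (G : eq_group C) n (h : ('I_n -> C) -> eg_car G)
  (t : 'I_(n + eg_k G) -> C) : Prop :=
  [/\ forall j, R (tleft t j), eg_dom (tright t) & h (tleft t) = eg_proj (tright t)].

Definition mul_graph (G : eq_group C) (t : 'I_(eg_k G + eg_k G + eg_k G) -> C) : Prop :=
  [/\ eg_dom (tleft (tleft t)), eg_dom (tright (tleft t)), eg_dom (tright t) &
      eg_proj (tright t) = eg_mul (eg_proj (tleft (tleft t))) (eg_proj (tright (tleft t)))].

End Graphs.
Arguments mul_graph {L C} G t.

Section EqGroups.
Variables (L : language) (C : structure L).
Variables (Z R : C -> Prop) (G : eq_group C).
Hypothesis HG : def_group Z R G.

Lemma eg_mulA (x y z : eg_car G) : eg_mul x (eg_mul y z) = eg_mul (eg_mul x y) z.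
Proof. by case: HG => _ [_ [_ [_ [_ []]]]]. Qed.

Lemma eg_mul1g (x : eg_car G) : eg_mul (eg_one G) x = x.
Proof. by case: HG => _ [_ [_ [_ [_ [_ []]]]]]. Qed.

Lemma eg_mulVg (x : eg_car G) : eg_mul (eg_inv x) x = eg_one G.
Proof. by case: HG => _ [_ [_ [_ [_ [_ []]]]]]. Qed.

Lemma eg_idem (x : eg_car G) : eg_mul x x = x -> x = eg_one G.
Proof.
move=> xx; have : eg_mul (eg_inv x) (eg_mul x x) = eg_mul (eg_inv x) x by rewrite xx.
by rewrite eg_mulA eg_mulVg eg_mul1g.
Qed.

Lemma eg_mulgV (x : eg_car G) : eg_mul x (eg_inv x) = eg_one G.
Proof.
apply: eg_idem; rewrite -eg_mulA [eg_mul (eg_inv x) _]eg_mulA eg_mulVg.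
by rewrite eg_mul1g.
Qed.

Lemma eg_dom_sort t : eg_dom t -> sortset Z R (@eg_col C G) t.
Proof. by case: HG => H _; apply: H. Qed.

Lemma eg_dom_definable : definable (@eg_dom C G).
Proof. by case: HG => _ []. Qed.

Lemma eg_proj_onto (g : eg_car G) : exists t, eg_dom t /\ eg_proj t = g.
Proof. by case: HG => _ [_ []]. Qed.

Lemma mul_graph_definable : definable (mul_graph G).
Proof. by case: HG => _ [_ [_ [_ []]]]. Qed.

End EqGroups.

Lemma hom_one (L : language) (C : structure L) (Z R : C -> Prop) (G H : eq_group C)
  (f : eg_car G -> eg_car H) :
  def_group Z R G -> def_group Z R H ->
  (forall x y, f (eg_mul x y) = eg_mul (f x) (f y)) -> f (eg_one G) = eg_one H.
Proof. by move=> HG HH fM; apply: (eg_idem HH); rewrite -fM (eg_mul1g HG). Qed.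

Section Lifting.
Variables (L : language) (C : structure L) (c0 : C) (Z R : C -> Prop)
  (A B Cg : eq_group C) (i : eg_car A -> eg_car B) (f : eg_car B -> eg_car Cg).
Hypotheses (HR : definable1 R) (HA : def_group Z R A) (HB : def_group Z R B)
  (HC : def_group Z R Cg) (Hi : def_hom i) (Hf : def_hom f)
  (kerf : forall b, f b = eg_one Cg <-> exists a, i a = b).
Variables (na nc : nat) (hA : ('I_na -> C) -> eg_car A) (hC : ('I_nc -> C) -> eg_car Cg).
Hypotheses (hA_onto : forall a, exists r, (forall j, R (r j)) /\ hA r = a)
  (hA_def : definable (int_graph R hA))
  (hC_onto : forall c, exists r, (forall j, R (r j)) /\ hC r = c)
  (hC_def : definable (int_graph R hC)).
Variables (p q : nat) (sel : 'I_(eg_k B) -> 'I_p + 'I_q).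

Local Notation kB := (eg_k B).

Definition is_lift (rc : 'I_nc -> C) (u : 'I_kB -> C) :=
  eg_dom u /\ f (eg_proj u) = hC rc.

Lemma is_liftE rc u : (forall j, R (rc j)) ->
  is_lift rc u <-> exists w, map_graph f (tcat u w) /\ int_graph R hC (tcat rc w).
Proof.
move=> Rrc; rewrite /is_lift /map_graph /int_graph; split=> [[du fu]|[w []]].
  have [w [dw Ew]] := eg_proj_onto HC (f (eg_proj u)).
  by exists w; rewrite !tleft_tcat !tright_tcat Ew fu; split; split.
by rewrite !tleft_tcat !tright_tcat => -[du _ ->] [_ _ ->].
Qed.

Lemma definable_lifts n (U : ('I_n -> C) -> 'I_kB -> C) (Rc : ('I_n -> C) -> 'I_nc -> C) :
  coord_map U -> coord_map Rc ->
  definable (fun t => exists w, map_graph f (tcat (U t) w) /\ int_graph R hC (tcat (Rc t) w)).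
Proof.
move=> cU cR; apply: (definable_exists c0); apply: (definableI c0).
  apply: (definable_comp c0) (proj1 Hf).
  by apply: coord_map_tcat; [apply: coord_map_comp cU _|]; auto 20 with coord_map.
apply: (definable_comp c0) hC_def.
by apply: coord_map_tcat; [apply: coord_map_comp cR _|]; auto 20 with coord_map.
Qed.

Section FiniteLifts.
Variables (m : nat) (z : 'I_m -> 'I_p -> C).
Hypothesis z_lifts : forall rc, (forall j, R (rc j)) ->
  exists k y, (forall j, R (y j)) /\ is_lift rc (tmerge sel (z k) y).

Local Notation n := (na + nc + q).

(* A tuple [r] is read as a triple [(ra, rc, y)]. *)
Definition lift_at k (r : 'I_n -> C) :=
  is_lift (tright (tleft r)) (tmerge sel (z k) (tright r)).

Definition lift_value k (r : 'I_n -> C) :=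
  eg_mul (eg_proj (tmerge sel (z k) (tright r))) (i (hA (tleft (tleft r)))).

Definition hB (r : 'I_n -> C) : eg_car B :=
  if first_ord (lift_at^~ r) is Some k then lift_value k r else eg_one B.

Lemma hB_onto b : exists r, (forall j, R (r j)) /\ hB r = b.
Proof.
have [rc [Rrc Erc]] := hC_onto (f b).
have [k [y [Ry lift_k]]] := z_lifts Rrc.
have [k0 [lift_k0 min_k0]] :=
  ex_minimal_ord (ex_intro (fun k => is_lift rc (tmerge sel (z k) y)) k lift_k).
set x := eg_proj (tmerge sel (z k0) y).
have f_x : f x = f b by case: lift_k0 => _ ->.
have [a ia] : exists a, i a = eg_mul (eg_inv x) b.
  apply/kerf; rewrite (proj2 Hf) -f_x -(proj2 Hf) (eg_mulVg HB).
  exact: hom_one HB HC (proj2 Hf).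
have [ra [Rra Era]] := hA_onto a.
exists (tcat (tcat ra rc) y); split; first by do 2?apply: tcat_all.
rewrite /hB (proj2 (first_ordE _ k0)); last by rewrite /lift_at !tleft_tcat !tright_tcat.
rewrite /lift_value !tleft_tcat !tright_tcat Era ia -/x.
by rewrite (eg_mulA HB) (eg_mulgV HB) (eg_mul1g HB).
Qed.

Definition lift_at_graph k (t : 'I_(n + kB) -> C) :=
  exists w, map_graph f (tcat (tmerge sel (z k) (tright (tleft t))) w) /\
            int_graph R hC (tcat (tright (tleft (tleft t))) w).

Definition lift_value_graph k (t : 'I_(n + kB) -> C) :=
  exists s s', int_graph R hA (tcat (tleft (tleft (tleft t))) s) /\ map_graph i (tcat s s') /\
     mul_graph B (tcat (tcat (tmerge sel (z k) (tright (tleft t))) s') (tright t)).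

Lemma lift_atE k (t : 'I_(n + kB) -> C) :
  (forall j, R (tleft t j)) -> lift_at k (tleft t) <-> lift_at_graph k t.
Proof. by move=> Rr; apply: is_liftE => j; apply: Rr. Qed.

Lemma lift_valueE k (t : 'I_(n + kB) -> C) :
  (forall j, R (tleft t j)) -> eg_dom (tright t) -> lift_at k (tleft t) ->
  lift_value k (tleft t) = eg_proj (tright t) <-> lift_value_graph k t.
Proof.
move=> Rr dt [du _]; rewrite /lift_value_graph /int_graph /map_graph /mul_graph; split.
  move=> E; have [s [ds Es]] := eg_proj_onto HA (hA (tleft (tleft (tleft t)))).
  have [s' [ds' Es']] := eg_proj_onto HB (i (eg_proj s)).
  exists s, s'; rewrite !tleft_tcat !tright_tcat -E Es' Es.
  by split; [split=> // j; apply: Rr|split].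
move=> [s [s' []]]; rewrite !tleft_tcat !tright_tcat => -[_ _ Es] [[_ _ Es'] [_ _ _ ->]].
by rewrite -Es' -Es.
Qed.

Lemma hB_graphE (t : 'I_(n + kB) -> C) :
  (forall j, R (tleft t j)) -> eg_dom (tright t) ->
  hB (tleft t) = eg_proj (tright t) <->
  (exists k, [/\ lift_at_graph k t, forall k' : 'I_m, k' < k -> ~ lift_at_graph k' t &
                 lift_value_graph k t]) \/
  ((forall k, ~ lift_at_graph k t) /\
   mul_graph B (tcat (tcat (tright t) (tright t)) (tright t))).
Proof.
move=> Rr dt; rewrite /hB (eq_first_ord (P' := lift_at_graph^~ t)) => [|k];
  last exact: lift_atE.
apply: first_ord_caseE => [k /(lift_atE _ Rr) lift_k|]; first exact: lift_valueE.
(* [1] is the only idempotent of [B] *)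
rewrite /mul_graph !tleft_tcat !tright_tcat.
split=> [<-|[_ _ _ E]]; first by split; rewrite ?(eg_mul1g HB).
by symmetry; apply: (eg_idem HB); rewrite -E.
Qed.

Lemma hB_definable : definable (int_graph R hB).
Proof.
have lift_def k : definable (lift_at_graph k).
  by apply: definable_lifts; auto 20 with coord_map.
have value_def k : definable (lift_value_graph k).
  apply: (definable_exists c0); apply: (definable_exists c0).
  apply: (definableI c0); [|apply: (definableI c0)].
  - by apply: (definable_comp c0) hA_def; auto 20 with coord_map.
  - by apply: (definable_comp c0) (proj1 Hi); auto 20 with coord_map.
  - by apply: (definable_comp c0) (mul_graph_definable HB); auto 20 with coord_map.
apply: (definable_ext (D := fun t => (forall j, R (tleft t j)) /\ eg_dom (tright t) /\
  ((exists k, lift_at_graph k t /\ (forall k' : 'I_m, k' < k -> ~ lift_at_graph k' t) /\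
              lift_value_graph k t) \/
   ((forall k, ~ lift_at_graph k t) /\
    mul_graph B (tcat (tcat (tright t) (tright t)) (tright t)))))).
  move=> t; split=> [[Rr [dt H]]|[Rr dt /(hB_graphE Rr dt) H]]; split=> //.
    by apply/(hB_graphE Rr dt); case: H => [[k [? [? ?]]]|?]; [left; exists k|right].
  by split=> //; case: H => [[k []]|?]; [left; exists k|right].
apply: (definableI c0); first by apply: (definable_all c0) HR _; auto 20 with coord_map.
apply: (definableI c0).
  by apply: (definable_comp c0) (eg_dom_definable HB); auto 20 with coord_map.
apply: (definableU c0).
  apply: (definable_exists_ord c0) => k; apply: (definableI c0) => //.
  apply: (definableI c0) => //; apply: (definable_forall c0) => k'.
  exact/(definable_imply c0)/(definableN c0).
apply: (definableI c0); first by apply: (definable_forall c0) => k; apply: (definableN c0).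
by apply: (definable_comp c0) (mul_graph_definable HB); auto 20 with coord_map.
Qed.

End FiniteLifts.

Hypotheses (HZ : definable1 Z) (Hortho : fully_orthogonal Z R)
  (f_onto : forall c, exists b, f b = c)
  (sel_cover : forall t, eg_dom t -> exists x y,
     [/\ forall a, Z (x a), forall b, R (y b) & tmerge sel x y = t]).

Definition lift_triple (T : 'I_(p + (nc + q)) -> C) :=
  [/\ forall a, Z (tleft T a), forall j, R (tright T j) &
      is_lift (tleft (tright T)) (tmerge sel (tleft T) (tright (tright T)))].

Lemma lift_triple_definable : definable lift_triple.
Proof.
apply: (definable_ext (D := fun T => (forall a, Z (tleft T a)) /\ (forall j, R (tright T j)) /\
  exists w, map_graph f (tcat (tmerge sel (tleft T) (tright (tright T))) w) /\
            int_graph R hC (tcat (tleft (tright T)) w))).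
  move=> T; have Rrc : (forall j, R (tright T j)) -> forall j, R (tleft (tright T) j).
    by move=> RT j; apply: RT.
  split=> [[ZT [RT /(is_liftE _ (Rrc RT)) LT]]|[ZT RT /(is_liftE _ (Rrc RT)) LT]] //.
apply: (definableI c0); first by apply: (definable_all c0) HZ _; auto 20 with coord_map.
apply: (definableI c0); first by apply: (definable_all c0) HR _; auto 20 with coord_map.
by apply: definable_lifts; auto 20 with coord_map.
Qed.

Lemma exists_finite_lifts : exists m (z : 'I_m -> 'I_p -> C),
  forall rc, (forall j, R (rc j)) ->
  exists k y, (forall j, R (y j)) /\ is_lift rc (tmerge sel (z k) y).
Proof.
have [s [_ rectangles]] :=
  Hortho lift_triple_definable (fun T '(And3 ZT RT _) => conj ZT RT).
pose d := ((fun _ : 'I_p -> C => False), (fun _ : 'I_(nc + q) -> C => False)).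
pose witness (X : ('I_p -> C) -> Prop) := epsilon (inhabits (fun _ => c0)) X.
exists (List.length s), (fun k => witness (List.nth k s d).1) => rc Rrc.
have [b fb] := f_onto (hC rc).
have [t [dt tb]] := eg_proj_onto HB b.
have [x [y [Zx Ry xy]]] := sel_cover dt.
have [|P [inP []]] := proj1 (rectangles (tcat x (tcat rc y))).
  rewrite /lift_triple !tleft_tcat !tright_tcat tleft_tcat.
  by split=> //; [exact: tcat_all|rewrite xy /is_lift tb fb].
rewrite tleft_tcat tright_tcat => Px Py.
have [k [lt_k Pk]] := List.In_nth s P d inP.
exists (Ordinal (introT ltP lt_k)), y; split=> //.
have : lift_triple (tcat (witness (List.nth k s d).1) (tcat rc y)).
  apply/rectangles; exists P; rewrite tleft_tcat tright_tcat Pk; split=> //; split=> //.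
  by apply: epsilon_spec; exists x.
by rewrite /lift_triple !tleft_tcat !tright_tcat tleft_tcat => -[].
Qed.

End Lifting.

Lemma card_lt_inhabited (I J : Type) : card_lt I J -> inhabited J.
Proof.
move=> [_ no_inj]; apply: NNPP => empty; apply: no_inj.
by exists (fun y => False_rect I (empty (inhabits y))) => y; case: (empty (inhabits y)).
Qed.

Lemma sortset_tmerge (M : Type) (m0 : M) (Z R : M -> Prop) k (col : 'I_k -> bool) :
  exists p q (sel : 'I_k -> 'I_p + 'I_q), forall t, sortset Z R col t ->
    exists x y, [/\ forall a, Z (x a), forall b, R (y b) & tmerge sel x y = t].
Proof.
have [[z Zz]|noZ] := classic (exists z, Z z); last first.
  exists 0, k, inr => t St; exists (fun _ => m0), t; split=> // [[] //|b].
  by move: (St b); case: (col b) => // Zt; case: noZ; exists (t b).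
have [[r Rr]|noR] := classic (exists r, R r); last first.
  exists k, 0, inl => t St; exists t, (fun _ => m0); split=> // [a|[] //].
  by move: (St a); case: (col a) => // Rt; case: noR; exists (t a).
exists k, k, (fun i => if col i then inl i else inr i) => t St.
exists (fun i => if col i then t i else z), (fun i => if col i then r else t i).
split=> [a|b|]; first (by move: (St a); case: (col a)); first by move: (St b); case: (col b).
by apply: functional_extensionality => i; rewrite /tmerge; case E: (col i); rewrite /= ?E.
Qed.

Theorem lemma8p2 (L : language) (C : structure L) (Z R : C -> Prop)
  (A B Cg : eq_group C) (i : eg_car A -> eg_car B) (f : eg_car B -> eg_car Cg) :
  monster C ->
  definable1 Z -> definable1 R ->
  stably_embedded Z -> stably_embedded R -> fully_orthogonal Z R ->
  def_group Z R A -> def_group Z R B -> def_group Z R Cg ->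
  def_hom i -> def_hom f ->
  injective i -> (forall c, exists b, f b = c) ->
  (forall b, f b = eg_one Cg <-> exists a, i a = b) ->
  R_internal R A -> R_internal R Cg ->
  R_internal R B.
Proof.
move=> [_ ltLC] HZ HR _ _ Hortho HA HB HC Hi Hf _ f_onto kerf
  [na [hA [hA_onto hA_def]]] [nc [hC [hC_onto hC_def]]].
have [c0] := card_lt_inhabited ltLC.
have [p [q [sel sel_cover]]] := sortset_tmerge c0 Z R (@eg_col C B).
have [m [z z_lifts]] := exists_finite_lifts c0 HR HB HC Hf hC_def HZ Hortho f_onto
  (fun t dt => sel_cover t (eg_dom_sort HB dt)).
exists (na + nc + q), (hB i f hA hC sel z); split.
  exact (hB_onto HB HC Hf kerf hA_onto hC_onto z_lifts).
exact (hB_definable c0 HR HA HB HC Hi Hf hA_def hC_def sel z).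
Qed.
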